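(* Let $G$ be a $(\Delta+1)$-graph and let $H$ be a subgraph of a regular $(\Delta+1)$-graph $H'$ such that $$\Delta(G)+1\ \ge\ \Delta(H')-\Delta(H).$$ Then $\chi_i(G\,\square\, H)\le \Delta(G\,\square\, H)+2$.
   Context: All graphs are finite and simple. An incidence of a graph $G$ is a pair $(v,e)$ with $v\in V(G)$, $e\in E(G)$ and $v\in e$. Two incidences $(v,e)$ and $(u,f)$ are adjacent if $v=u$, or $e=f$, or $vu\in\{e,f\}$. An incidence coloring of $G$ assigns colors to all incidences so that adjacent incidences receive distinct colors. $\chi_i(G)$ is the least number of colors in an incidence coloring of $G$. $\Delta(G)$ denotes the maximum degree. For a positive integer $k$, $G$ is a $(\Delta+k)$-graph if it admits an incidence coloring with at most $\Delta(G)+k$ colors. $G\,\square\,H$ denotes the Cartesian product: vertex set $V(G)\times V(H)$, with $(u,v)\sim(u',v')$ iff ($uu'\in E(G)$ and $v=v'$) or ($u=u'$ and $vv'\in E(H)$). *)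

From mathcomp Require Import all_boot.
Set Implicit Arguments. Unset Strict Implicit. Unset Printing Implicit Defensive.

Record sgraph := SGraph {
  svert :> finType;
  sadj : rel svert;
  sadj_sym : symmetric sadj;
  sadj_irr : irreflexive sadj }.

Definition deg (G : sgraph) (v : G) : nat := #|[set w | sadj v w]|.
Definition maxdeg (G : sgraph) : nat := \max_(v : G) deg v.

Definition regular (G : sgraph) : Prop := forall v w : G, deg v = deg w.

(* H is a subgraph of H' (up to isomorphism): an injective adjacency-preserving
   map from V(H) into V(H'). *)
Definition subgraph (H H' : sgraph) : Prop :=
  exists f : svert H -> svert H', injective f /\ forall x y, sadj x y -> sadj (f x) (f y).

Definition edge (G : sgraph) (v w : G) : {set G} := [set v; w].

(* An incidence (v, e) with e = vw is represented by the ordered pair (v, w)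
   with sadj v w.  Adjacency of incidences (v,vw) and (u,ux):
   v = u, or vw = ux, or the edge vu is one of vw, ux. *)
Definition inc_adj (G : sgraph) (v w u x : G) : bool :=
  [|| v == u, edge v w == edge u x, edge v u == edge v w | edge v u == edge u x].

(* The coloring
   is a finite function on all ordered pairs (values at non-incidences are
   irrelevant); its codomain 'I_k.+1 is just a finite container, the colors
   actually used on incidences are required to be < k. *)
Definition incidence_coloring (G : sgraph) (k : nat)
    (c : {ffun svert G * svert G -> 'I_k.+1}) : bool :=
  [forall v : G, forall w : G, sadj v w ==> (c (v, w) < k)] &&
  [forall v : G, forall w : G, forall u : G, forall x : G,
     [&& sadj v w, sadj u x, (v, w) != (u, x) & inc_adj v w u x]
       ==> (c (v, w) != c (u, x))].

Definition incidence_colorable (G : sgraph) (k : nat) : bool :=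
  [exists c, @incidence_coloring G k c].

Lemma incidence_colorable_exists (G : sgraph) :
  exists k, incidence_colorable G k.
Proof.
exists #|{: G * G}|; apply/existsP.
exists [ffun p => widen_ord (leqnSn _) (enum_rank p)].
apply/andP; split.
  by apply/forallP=> v; apply/forallP=> w; rewrite ffunE /= ltn_ord implybT.
apply/forallP=> v; apply/forallP=> w; apply/forallP=> u; apply/forallP=> x.
apply/implyP=> /and4P [_ _ ne _]; rewrite !ffunE.
apply/negP=> /eqP /(congr1 val) /= /val_inj /enum_rank_inj E.
by rewrite E eqxx in ne.
Qed.

Definition chi_i (G : sgraph) : nat :=
  ex_minn (@incidence_colorable_exists G).

Definition delta_plus_graph (k : nat) (G : sgraph) : Prop :=
  incidence_colorable G (maxdeg G + k).

Definition cart_adj (G H : sgraph) : rel (G * H) :=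
  fun p q => (sadj p.1 q.1 && (p.2 == q.2)) || ((p.1 == q.1) && sadj p.2 q.2).

Lemma cart_adj_sym (G H : sgraph) : symmetric (@cart_adj G H).
Proof.
move=> [a b] [c d]; rewrite /cart_adj /= (sadj_sym a c) (sadj_sym b d).
by rewrite (eq_sym b d) (eq_sym a c).
Qed.

Lemma cart_adj_irr (G H : sgraph) : irreflexive (@cart_adj G H).
Proof. by move=> [a b]; rewrite /cart_adj /= !sadj_irr !andbF. Qed.

Definition cart (G H : sgraph) : sgraph :=
  @SGraph (G * H)%type (@cart_adj G H) (@cart_adj_sym G H) (@cart_adj_irr G H).

From mathcomp Require Import all_boot zify.
Set Implicit Arguments. Unset Strict Implicit. Unset Printing Implicit Defensive.

(* In a (Delta+1)-incidence coloring of a regular graph, the Delta outgoing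
   incidences at w use Delta distinct colors and every incoming incidence at w
   must avoid all of them, so all incoming incidences at w share the single
   remaining color.  Pull such a coloring of H' back to H; it colors the
   H-incidences of the product, and at each vertex v of H it blocks at most
   deg v + 1 colors.  Of the Delta(G x H) + 2 >= Delta(G) + deg v + 2 available
   colors, Delta(G) + 1 remain free at v, enough to recolor a copy of the
   (Delta+1)-incidence coloring of G on the G-fiber through v.  The hypothesis
   on Delta(H') only ensures that the colors of H' fit in the palette. *)

Lemma sadj_neq (G : sgraph) (v w : G) : sadj v w -> v != w.
Proof. by apply: contraTneq => ->; rewrite sadj_irr. Qed.

Lemma eq_set2 (T : finType) (a b c d : T) : a != b ->
  ([set a; b] == [set c; d]) = ((a == c) && (b == d)) || ((a == d) && (b == c)).
Proof.
move=> nab; apply/eqP/idP => [E|]; last first.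
  by case/orP=> /andP[/eqP-> /eqP->] //; rewrite setUC.
have: a \in [set c; d] by rewrite -E set21.
have: b \in [set c; d] by rewrite -E set22.
have: c \in [set a; b] by rewrite E set21.
have: d \in [set a; b] by rewrite E set22.
rewrite !inE; case: (a =P c); case: (a =P d); case: (b =P c); case: (b =P d);
  move=> //= *; subst; by move: nab; rewrite ?eqxx.
Qed.

Lemma inc_adjE (G : sgraph) (v w u x : G) : sadj v w -> sadj u x ->
  inc_adj v w u x = [|| v == u, w == u | v == x].
Proof.
move=> /sadj_neq nvw /sadj_neq nux; rewrite /inc_adj /edge.
have [//|/eqP nvu] := v =P u.
rewrite !eq_set2 // (negbTE nvu) !eqxx (eq_sym u w) (negbTE nvw) /=.
by case: (v == x); case: (w == u); rewrite ?andbF ?andbT ?orbT ?orbF.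
Qed.

Record inc_coloring (G : sgraph) (k : nat) (c : G -> G -> nat) : Prop := IncColoring {
  inc_color_lt : forall v w, sadj v w -> c v w < k;
  inc_color_neq : forall v w u x, sadj v w -> sadj u x -> (v, w) != (u, x) ->
    [|| v == u, w == u | v == x] -> c v w != c u x }.

Lemma incidence_colorableP (G : sgraph) (k : nat) :
  incidence_colorable G k <-> exists c : G -> G -> nat, inc_coloring k c.
Proof.
split.
  case/existsP=> c /andP[/forallP lt_c /forallP neq_c].
  exists (fun v w => val (c (v, w))); split=> [v w vw | v w u x vw ux ne adj].
    by have /forallP/(_ w)/implyP := lt_c v; apply.
  have /forallP/(_ w)/forallP/(_ u)/forallP/(_ x)/implyP := neq_c v.
  by rewrite vw ux ne inc_adjE // adj => /(_ isT).
case=> c [lt_c neq_c]; apply/existsP.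
exists [ffun p => inord (c p.1 p.2)]; apply/andP; split.
  apply/forallP=> v; apply/forallP=> w; apply/implyP=> vw.
  have ck := lt_c v w vw; by rewrite ffunE /= inordK // ltnW.
apply/forallP=> v; apply/forallP=> w; apply/forallP=> u; apply/forallP=> x.
apply/implyP=> /and4P[vw ux ne adj]; rewrite !ffunE /=.
apply: contra_neq (neq_c _ _ _ _ vw ux ne _); last by rewrite -inc_adjE.
have [cvw cux] := (lt_c _ _ vw, lt_c _ _ ux).
by move/(congr1 val); rewrite /= !inordK // ltnW.
Qed.

Lemma chi_i_le (G : sgraph) (k : nat) : incidence_colorable G k -> chi_i G <= k.
Proof. by rewrite /chi_i; case: ex_minnP => m _; apply. Qed.

Lemma inc_coloring_subgraph (H H' : sgraph) (f : H -> H') k c :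
  injective f -> (forall x y, sadj x y -> sadj (f x) (f y)) ->
  inc_coloring k c -> inc_coloring k (fun x y => c (f x) (f y)).
Proof.
move=> finj fadj [lt_c neq_c]; split=> [x y /fadj /lt_c // | v w u x vw ux ne adj].
by apply: neq_c; rewrite ?fadj ?xpair_eqE ?(inj_eq finj).
Qed.

Lemma deg_le_maxdeg (G : sgraph) (v : G) : deg v <= maxdeg G.
Proof. exact: (@leq_bigmax_cond G xpredT (fun w : G => deg w) v). Qed.

Lemma regular_degE (G : sgraph) (v : G) : regular G -> deg v = maxdeg G.
Proof.
move=> reg; apply/eqP; rewrite eqn_leq deg_le_maxdeg.
by apply/bigmax_leqP=> w _; rewrite (reg w v).
Qed.

Lemma regular_inc_coloring_in_eq (G : sgraph) c :
  regular G -> inc_coloring (maxdeg G + 1) c ->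
  forall y y' w : G, sadj y w -> sadj y' w -> c y w = c y' w.
Proof.
move=> reg [lt_c neq_c] y y' w yw y'w; apply/eqP/negPn/negP => ne_in.
pose out := [seq c w x | x <- enum [set x | sadj w x]].
have out_uniq : uniq out.
  rewrite map_inj_in_uniq ?enum_uniq // => x1 x2.
  rewrite !mem_enum !inE => wx1 wx2; apply: contra_eq => ne.
  by apply: neq_c; rewrite ?xpair_eqE ?eqxx.
have notin_out z : sadj z w -> c z w \notin out.
  move=> zw; apply/mapP=> -[x]; rewrite mem_enum inE => wx; apply/eqP.
  by apply: neq_c; rewrite ?xpair_eqE ?(negbTE (sadj_neq zw)) ?eqxx ?orbT.
have colors_uniq : uniq [:: c y w, c y' w & out].
  by rewrite /= inE negb_or ne_in !notin_out.
have colors_lt : {subset [:: c y w, c y' w & out] <= iota 0 (maxdeg G + 1)}.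
  move=> z; rewrite mem_iota add0n !inE => /or3P[/eqP-> | /eqP-> |].
  - exact: lt_c.
  - exact: lt_c.
  by case/mapP=> x; rewrite mem_enum inE => /lt_c lt ->.
have := uniq_leq_size colors_uniq colors_lt.
by rewrite /= size_map -cardE -/(deg w) regular_degE // size_iota addn1 ltnn.
Qed.

Lemma regular_inc_coloring_in_color (G : sgraph) c :
  regular G -> inc_coloring (maxdeg G + 1) c ->
  exists cin : G -> nat, forall y w, sadj y w -> c y w = cin w.
Proof.
move=> reg col; exists (fun w => if [pick y | sadj y w] is Some y then c y w else 0).
move=> y w yw; case: pickP => [y' y'w | /(_ y)]; last by rewrite yw.
exact: regular_inc_coloring_in_eq.
Qed.

Lemma size_filter_notin_iota (s : seq nat) (K : nat) :
  K - size s <= size [seq j <- iota 0 K | j \notin s].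
Proof.
have := count_predC (mem s) (iota 0 K); rewrite size_iota.
have : count (mem s) (iota 0 K) <= size s.
  rewrite -size_filter; apply: uniq_leq_size => [|j].
    by rewrite filter_uniq ?iota_uniq.
  by rewrite mem_filter => /andP[].
rewrite size_filter; change (count (fun j => j \notin s) (iota 0 K))
  with (count (predC (mem s)) (iota 0 K)); lia.
Qed.

Lemma deg_cart (G H : sgraph) (u : G) (v : H) :
  deg u + deg v <= @deg (cart G H) (u, v).
Proof.
rewrite /deg.
set A := [set (x, v) | x in [set x | sadj u x]].
set B := [set (u, y) | y in [set y | sadj v y]].
have -> : #|[set x | sadj u x]| = #|A| by rewrite card_in_imset // => x1 x2 _ _ [].
have -> : #|[set y | sadj v y]| = #|B| by rewrite card_in_imset // => y1 y2 _ _ [].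
have disjAB : A :&: B = set0.
  apply/setP=> -[x y]; rewrite !inE; apply/andP.
  case=> /imsetP[x' ux' [-> ->]] /imsetP[y' _ [ex _]].
  by move: ux'; rewrite inE ex sadj_irr.
have -> : #|A| + #|B| = #|A :|: B| by rewrite cardsU disjAB cards0 subn0.
apply/subset_leq_card/subsetP=> q; rewrite !inE.
by case/orP=> /imsetP[z]; rewrite inE => uz ->; rewrite /= /cart_adj /= uz eqxx ?orbT.
Qed.

Lemma maxdeg_cart (G H : sgraph) (u : G) (v : H) :
  maxdeg G + maxdeg H <= maxdeg (cart G H).
Proof.
set k := maxdeg (cart G H).
have deg_le (u' : G) (v' : H) : deg u' + deg v' <= k.
  exact: leq_trans (deg_cart u' v') (@deg_le_maxdeg (cart G H) (u', v')).
have maxG_le (v' : H) : maxdeg G <= k - deg v'.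
  by apply/bigmax_leqP=> u' _; have := deg_le u' v'; lia.
have : maxdeg H <= k - maxdeg G.
  by apply/bigmax_leqP=> v' _; have := maxG_le v'; have := deg_le u v'; lia.
by have := maxG_le v; have := deg_le u v; lia.
Qed.

Variant cart_adj_spec (G H : sgraph) : G * H -> G * H -> Prop :=
  | CartAdjL u1 u2 v of sadj u1 u2 : cart_adj_spec (u1, v) (u2, v)
  | CartAdjR u v1 v2 of sadj v1 v2 : cart_adj_spec (u, v1) (u, v2).

Lemma cart_adjP (G H : sgraph) (p q : cart G H) : sadj p q -> cart_adj_spec p q.
Proof.
case: p q => [u1 v1] [u2 v2] /orP /= [/andP[u12 /eqP<-] | /andP[/eqP<- v12]].
  exact: CartAdjL.
exact: CartAdjR.
Qed.

Section CartColoring.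

Variables (G H : sgraph) (m n K : nat) (cG : G -> G -> nat) (cH : H -> H -> nat).
Variable cin : H -> nat.
Hypotheses (cG_col : inc_coloring m cG) (cH_col : inc_coloring n cH).
Hypothesis cH_in : forall y v, sadj y v -> cH y v = cin v.
Hypotheses (m_lt_K : m + maxdeg H < K) (n_le_K : n <= K).

Definition used_colors (v : H) : seq nat :=
  cin v :: [seq cH v y | y <- enum [set y | sadj v y]].

Definition free_colors (v : H) : seq nat :=
  [seq j <- iota 0 K | j \notin used_colors v].

(* A G-incidence in the fiber over v gets the free color at v indexed by its
   cG-color; an H-incidence keeps its cH-color. *)
Definition cart_color (p q : G * H) : nat :=
  if p.2 == q.2 then nth 0 (free_colors p.2) (cG p.1 q.1) else cH p.2 q.2.

Lemma size_free_colors (v : H) : m <= size (free_colors v).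
Proof.
apply: leq_trans (size_filter_notin_iota _ _).
rewrite /= size_map -cardE; have := deg_le_maxdeg v; rewrite /deg; lia.
Qed.

Lemma free_colors_uniq (v : H) : uniq (free_colors v).
Proof. by rewrite filter_uniq ?iota_uniq. Qed.

Lemma mem_free_colors (v : H) (j : nat) :
  j \in free_colors v -> j < K /\ j \notin used_colors v.
Proof. by rewrite mem_filter mem_iota add0n => /andP[]. Qed.

Lemma cart_colorL (u1 u2 : G) (v : H) :
  cart_color (u1, v) (u2, v) = nth 0 (free_colors v) (cG u1 u2).
Proof. by rewrite /cart_color eqxx. Qed.

Lemma cart_colorR (u : G) (v1 v2 : H) :
  sadj v1 v2 -> cart_color (u, v1) (u, v2) = cH v1 v2.
Proof. by move=> /sadj_neq /negbTE ne; rewrite /cart_color /= ne. Qed.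

Lemma cart_colorL_free (u1 u2 : G) (v : H) :
  sadj u1 u2 -> cart_color (u1, v) (u2, v) \in free_colors v.
Proof.
move=> u12; rewrite cart_colorL mem_nth //.
exact: leq_trans (inc_color_lt cG_col u12) (size_free_colors v).
Qed.

Lemma cart_colorLR_neq (u1 u2 u : G) (v v1 v2 : H) :
  sadj u1 u2 -> sadj v1 v2 -> (v == v1) || (v == v2) ->
  cart_color (u1, v) (u2, v) != cart_color (u, v1) (u, v2).
Proof.
move=> u12 v12 vv; rewrite cart_colorR //.
have [_] := mem_free_colors (cart_colorL_free v u12); apply: contraNneq => ->.
case/orP: vv => /eqP->; rewrite inE; last by rewrite (cH_in v12) eqxx.
by apply/orP; right; apply/mapP; exists v2; rewrite ?mem_enum ?inE.
Qed.

Lemma cart_inc_coloring : @inc_coloring (cart G H) K cart_color.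
Proof.
split=> [p q | p q r s].
  case/cart_adjP=> [u1 u2 v u12 | u v1 v2 v12].
    by have [] := mem_free_colors (cart_colorL_free v u12).
  by rewrite cart_colorR //; apply: leq_trans n_le_K; apply: inc_color_lt v12.
case/cart_adjP=> [u1 u2 v u12 | u v1 v2 v12];
  case/cart_adjP=> [u3 u4 v' u34 | u' v3 v4 v34]; rewrite !xpair_eqE /= => ne adj.
- have ev : v == v' by case/or3P: adj => /andP[].
  rewrite (eqP ev) !cart_colorL nth_uniq ?free_colors_uniq //; last 2 first.
  + exact: leq_trans (inc_color_lt cG_col u12) (size_free_colors v').
  + exact: leq_trans (inc_color_lt cG_col u34) (size_free_colors v').
  by rewrite ev !andbT in ne adj; apply: (inc_color_neq cG_col); rewrite ?xpair_eqE.
- apply: cart_colorLR_neq => //.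
  by case/or3P: adj => /andP[_ ->]; rewrite ?orbT.
- rewrite eq_sym; apply: cart_colorLR_neq => //.
  by case/or3P: adj => /andP[_ /eqP->]; rewrite eqxx ?orbT.
- have eu : u == u' by case/or3P: adj => /andP[].
  rewrite (eqP eu) eqxx /= in ne adj.
  by rewrite !cart_colorR //; apply: (inc_color_neq cH_col); rewrite ?xpair_eqE.
Qed.

End CartColoring.

Theorem mainTheorem2 (G H H' : sgraph) :
  delta_plus_graph 1 G ->
  delta_plus_graph 1 H' -> regular H' -> subgraph H H' ->
  maxdeg H' - maxdeg H <= maxdeg G + 1 ->
  chi_i (cart G H) <= maxdeg (cart G H) + 2.
Proof.
move=> /incidence_colorableP[cG G_col] /incidence_colorableP[cH' H'_col] reg.
case=> f [finj fadj] maxdeg_H'.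
have [cin' cH'_in] := regular_inc_coloring_in_color reg H'_col.
apply/chi_i_le/incidence_colorableP.
have [[u v] _ | cart_empty] := pickP (@predT (cart G H)); last first.
  by exists (fun _ _ => 0); split=> p; have := cart_empty p.
have maxdeg_GH := maxdeg_cart u v.
exists (cart_color (maxdeg (cart G H) + 2) cG (fun x y => cH' (f x) (f y)) (cin' \o f)).
apply: (@cart_inc_coloring _ _ (maxdeg G + 1) (maxdeg H' + 1)).
- exact: G_col.
- exact: inc_coloring_subgraph finj fadj H'_col.
- by move=> y w /fadj /cH'_in.
- lia.
- lia.
Qed.
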